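(* Let $\mathfrak{L}$ be a language, $M,N$ $\mathfrak{L}$-structures and $n\ge0$. Then ${\rm Th}_{\exists^{n+1}}(M)\subseteq{\rm Th}_{\exists^{n+1}}(N)$ if and only if for every $a\in M$ there exist an elementary extension $N\prec N^*$ and $b\in N^*$ such that ${\rm Th}_{\exists^n}(M,a)\subseteq{\rm Th}_{\exists^n}(N^*,b)$, where $(M,a)$ and $(N^*,b)$ are regarded as $\mathfrak{L}(c)$-structures with $c$ a new constant symbol interpreted as $a$ resp. $b$.
   Context: The fragments $\exists^n$ are defined inductively: $\exists^0$-formulas are the quantifier-free formulas, and an $\exists^{n}$-formula ($n\ge1$) is a formula of the form $\psi$ or $\exists x\,\psi$ with $\psi$ a positive boolean combination of $\exists^{n-1}$-formulas. ${\rm Th}_{\exists^n}(M)$ is the set of positive boolean combinations of $\exists^n$-sentences true in $M$. *)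

From mathcomp Require Import all_boot.
Set Implicit Arguments. Unset Strict Implicit. Unset Printing Implicit Defensive.

Record Lang := {
  Fun : Type;
  Rel : Type;
  farity : Fun -> nat;
  rarity : Rel -> nat }.

Record Struc (L : Lang) := {
  dom : Type;
  dom_inhabited : inhabited dom;
  finterp : forall f : Fun L, ('I_(farity f) -> dom) -> dom;
  rinterp : forall r : Rel L, ('I_(rarity r) -> dom) -> Prop }.

Arguments dom {L} s.
Arguments dom_inhabited {L} s.
Arguments finterp {L} s f _.
Arguments rinterp {L} s r _.
Arguments farity {l} f.
Arguments rarity {l} r.

(** Terms and formulas, variables as de Bruijn indices. *)
Inductive term (L : Lang) : Type :=
  | Tvar : nat -> term L
  | Tapp (f : Fun L) : ('I_(farity f) -> term L) -> term L.

Inductive form (L : Lang) : Type :=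
  | Ftrue : form L
  | Ffalse : form L
  | Feq : term L -> term L -> form L
  | Frel (r : Rel L) : ('I_(rarity r) -> term L) -> form L
  | Fnot : form L -> form L
  | Fand : form L -> form L -> form L
  | For : form L -> form L -> form L
  | Fex : form L -> form L
  | Fall : form L -> form L.

Arguments Tvar {L}.
Arguments Ftrue {L}.
Arguments Ffalse {L}.

Definition scons (D : Type) (a : D) (env : nat -> D) : nat -> D :=
  fun k => match k with 0 => a | S m => env m end.

Fixpoint eval (L : Lang) (M : Struc L) (env : nat -> dom M) (t : term L)
  : dom M :=
  match t with
  | Tvar k => env k
  | Tapp f args => finterp M f (fun i => eval env (args i))
  end.

Fixpoint sat (L : Lang) (M : Struc L) (env : nat -> dom M) (phi : form L)
  : Prop :=
  match phi with
  | Ftrue => True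
  | Ffalse => False
  | Feq t u => eval env t = eval env u
  | Frel r args => rinterp M r (fun i => eval env (args i))
  | Fnot p => ~ sat env p
  | Fand p q => sat env p /\ sat env q
  | For p q => sat env p \/ sat env q
  | Fex p => exists a : dom M, sat (scons a env) p
  | Fall p => forall a : dom M, sat (scons a env) p
  end.

Fixpoint closed_term (L : Lang) (k : nat) (t : term L) : Prop :=
  match t with
  | Tvar m => m < k
  | Tapp f args => forall i, closed_term k (args i)
  end.

Fixpoint closed_at (L : Lang) (k : nat) (phi : form L) : Prop :=
  match phi with
  | Ftrue | Ffalse => True
  | Feq t u => closed_term k t /\ closed_term k u
  | Frel r args => forall i, closed_term k (args i)
  | Fnot p => closed_at k p
  | Fand p q | For p q => closed_at k p /\ closed_at k q
  | Fex p | Fall p => closed_at k.+1 p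
  end.

Definition sentence (L : Lang) (phi : form L) : Prop := closed_at 0 phi.

Definition true_in (L : Lang) (M : Struc L) (phi : form L) : Prop :=
  forall env : nat -> dom M, sat env phi.

Fixpoint qf (L : Lang) (phi : form L) : Prop :=
  match phi with
  | Fex _ | Fall _ => False
  | Fnot p => qf p
  | Fand p q | For p q => qf p /\ qf q
  | _ => True
  end.

Inductive PosComb (L : Lang) (P : form L -> Prop) : form L -> Prop :=
  | PC_base phi : P phi -> PosComb P phi
  | PC_and phi psi : PosComb P phi -> PosComb P psi -> PosComb P (Fand phi psi)
  | PC_or phi psi : PosComb P phi -> PosComb P psi -> PosComb P (For phi psi).

Fixpoint En (L : Lang) (n : nat) (phi : form L) : Prop :=
  match n with
  | 0 => qf phi
  | S m => PosComb (En m) phi \/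
           (exists psi, phi = Fex psi /\ PosComb (En m) psi)
  end.

Definition ThE (L : Lang) (n : nat) (M : Struc L) (phi : form L) : Prop :=
  PosComb (fun psi => En n psi /\ sentence psi) phi /\ true_in M phi.

Definition ThE_incl (L : Lang) (n : nat) (M N : Struc L) : Prop :=
  forall phi, ThE n M phi -> ThE n N phi.

(** Elementary extension N < N*, presented as an elementary embedding
    h : N -> N* (N is identified with its image). *)
Definition elementary_embedding (L : Lang) (N Nstar : Struc L)
  (h : dom N -> dom Nstar) : Prop :=
  forall (phi : form L) (env : nat -> dom N),
    sat env phi <-> sat (fun k => h (env k)) phi.

(** The language L(c): L with one new constant symbol c (= [None]). *)
Definition Lc (L : Lang) : Lang := {|
  Fun := option (Fun L);
  Rel := Rel L;
  farity := fun o => match o with Some f => farity f | None => 0 end;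
  rarity := @rarity L |}.

Definition expand (L : Lang) (M : Struc L) (a : dom M) : Struc (Lc L) := {|
  dom := dom M;
  dom_inhabited := dom_inhabited M;
  finterp := fun (o : Fun (Lc L)) =>
    match o return ('I_(@farity (Lc L) o) -> dom M) -> dom M with
    | Some f => fun args => finterp M f args
    | None => fun _ => a
    end;
  rinterp := fun r args => rinterp M r args |}.

(* An L(c)-sentence phi(c) corresponds to the L-formula phi(x) in one free
   variable ([abstrc 0] and [instc 0] below), and this correspondence preserves
   the fragments E^n.

   (<=) If chi(x) is a positive combination of E^n-formulas and M |= chi(a),
   then chi(c) is in Th_{E^n}(M, a), so N* |= chi(b), hence N* and therefore N
   satisfy (exists x, chi).  As E^{n+1}-sentences are of this form up to a dummy
   quantifier, and the sentences of Th_{E^{n+1}} are positive combinations of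
   them, the inclusion of theories follows.

   (=>) For phi(c) in Th_{E^n}(M, a), the sentence (exists x, phi(x)) lies in
   Th_{E^{n+1}}(M), hence holds in N: the sets phi(N) are nonempty, and since
   Th_{E^n}(M, a) is closed under conjunction they generate a proper filter on
   N.  For an ultrafilter U extending it, Łoś's theorem makes the diagonal map
   N -> N^U elementary and puts the class of the identity of N in every
   phi(N^U). *)

From mathcomp Require Import all_boot generic_quotient.
From mathcomp Require Import boolp classical_sets filter.

Set Implicit Arguments.
Unset Strict Implicit.
Unset Printing Implicit Defensive.

Local Open Scope classical_set_scope.
Local Open Scope quotient_scope.

Section Semantics.
Variable L : Lang.

Lemma eval_closed (M : Struc L) k (e1 e2 : nat -> dom M) (t : term L) :
  closed_term k t -> (forall m, m < k -> e1 m = e2 m) -> eval e1 t = eval e2 t.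
Proof.
move=> + e12; elim: t => [m|f args IH] /=; first exact: e12.
by move=> Hargs; congr (finterp M f); apply/funext => i; apply: IH.
Qed.

Lemma sat_closed (M : Struc L) (phi : form L) k (e1 e2 : nat -> dom M) :
  closed_at k phi -> (forall m, m < k -> e1 m = e2 m) -> sat e1 phi <-> sat e2 phi.
Proof.
elim: phi k e1 e2 => [| |t u|r args|p IH|p IHp q IHq|p IHp q IHq|p IH|p IH]
  k e1 e2 /= Hc e12 //.
- by case: Hc => Ht Hu; rewrite (eval_closed Ht e12) (eval_closed Hu e12).
- have -> // : (fun i => eval e1 (args i)) = (fun i => eval e2 (args i)).
  by apply/funext => i; apply: eval_closed (Hc i) e12.
- by rewrite (IH k e1 e2 Hc e12).
- by case: Hc => Hp Hq; rewrite (IHp k e1 e2 Hp e12) (IHq k e1 e2 Hq e12).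
- by case: Hc => Hp Hq; rewrite (IHp k e1 e2 Hp e12) (IHq k e1 e2 Hq e12).
- have Hx x : sat (scons x e1) p <-> sat (scons x e2) p.
    by apply: IH Hc _ => -[|m] //= /e12.
  by split=> -[x /Hx]; exists x.
- have Hx x : sat (scons x e1) p <-> sat (scons x e2) p.
    by apply: IH Hc _ => -[|m] //= /e12.
  by split=> H x; apply/Hx.
Qed.

Lemma sat_Fall_dual (M : Struc L) (e : nat -> dom M) (phi : form L) :
  sat e (Fall phi) <-> sat e (Fnot (Fex (Fnot phi))).
Proof.
split=> /= [Hall [x Hx]|Hnex x]; first exact: Hx (Hall x).
by apply: contrapT => Hx; apply: Hnex; exists x.
Qed.

Lemma closed_term_le k k' (t : term L) :
  k <= k' -> closed_term k t -> closed_term k' t.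
Proof.
move=> kk'; elim: t => [m|f args IH] /=; first by move/leq_trans; apply.
by move=> H i; apply: IH.
Qed.

Lemma closed_at_le (phi : form L) k k' :
  k <= k' -> closed_at k phi -> closed_at k' phi.
Proof.
elim: phi k k' => [| |t u|r args|p IH|p IHp q IHq|p IHp q IHq|p IH|p IH]
  k k' kk' //=.
- by case=> Ht Hu; split; apply: closed_term_le kk' _.
- by move=> H i; apply: closed_term_le kk' _.
- exact: IH.
- by case=> Hp Hq; split; [apply: IHp Hp|apply: IHq Hq].
- by case=> Hp Hq; split; [apply: IHp Hp|apply: IHq Hq].
- by apply: IH; rewrite ltnS.
- by apply: IH; rewrite ltnS.
Qed.

Lemma sentence_true_in (M : Struc L) (phi : form L) (e : nat -> dom M) :
  sentence phi -> sat e phi -> true_in M phi.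
Proof. by move=> Hs He e'; apply: (sat_closed Hs _).1 He. Qed.

Lemma sat_Fex_sentence (M : Struc L) (phi : form L) (e : nat -> dom M) :
  sentence phi -> sat e (Fex phi) <-> sat e phi.
Proof.
move=> Hs; have He x : sat (scons x e) phi <-> sat e phi by apply: sat_closed Hs _.
split=> [[x /He //]|]; case: (dom_inhabited M) => x.
by move/He; exists x.
Qed.

Lemma true_in_For (M : Struc L) (p q : form L) :
  sentence p -> sentence q -> true_in M (For p q) -> true_in M p \/ true_in M q.
Proof.
move=> Hp Hq HM; case: (dom_inhabited M) => x.
by case: (HM (fun _ => x)) => H; [left; apply: sentence_true_in Hp H
                                |right; apply: sentence_true_in Hq H].
Qed.

Lemma PosComb_closed_at (P : form L -> Prop) k (phi : form L) :
  PosComb P phi -> closed_at k phi -> PosComb (fun psi => P psi /\ closed_at k psi) phi.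
Proof.
elim=> [psi Hpsi|p q _ IHp _ IHq|p q _ IHp _ IHq] /=.
- by move=> Hc; apply: PC_base.
- by case=> Hp Hq; apply: PC_and; [apply: IHp|apply: IHq].
- by case=> Hp Hq; apply: PC_or; [apply: IHp|apply: IHq].
Qed.

Lemma closed_at_PosComb (P : form L -> Prop) k (phi : form L) :
  PosComb (fun psi => P psi /\ closed_at k psi) phi -> closed_at k phi.
Proof. by elim=> [psi []|p q _ Hp _ Hq|p q _ Hp _ Hq]. Qed.

Lemma PosComb_true_in_transfer (M N : Struc L) (P : form L -> Prop) (phi : form L) :
  (forall psi, P psi -> sentence psi -> true_in M psi -> true_in N psi) ->
  PosComb (fun psi => P psi /\ sentence psi) phi -> true_in M phi -> true_in N phi.
Proof.
move=> HP; elim=> [psi [HPpsi Hs]|p q _ IHp _ IHq|p q Hp IHp Hq IHq] HM.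
- exact: HP.
- by move=> e; split; [apply: IHp => e'; case: (HM e')|apply: IHq => e'; case: (HM e')].
- case: (true_in_For (closed_at_PosComb Hp) (closed_at_PosComb Hq) HM).
  + by move/IHp => HN e; left.
  + by move/IHq => HN e; right.
Qed.

End Semantics.

Lemma PosComb_map (L1 L2 : Lang) (P1 : form L1 -> Prop) (P2 : form L2 -> Prop)
    (g : form L1 -> form L2) (phi : form L1) :
  (forall p q, g (Fand p q) = Fand (g p) (g q)) ->
  (forall p q, g (For p q) = For (g p) (g q)) ->
  (forall psi, P1 psi -> P2 (g psi)) -> PosComb P1 phi -> PosComb P2 (g phi).
Proof.
move=> gA gO gP; elim=> [psi /gP|p q _ IHp _ IHq|p q _ IHp _ IHq].
- exact: PC_base.
- by rewrite gA; apply: PC_and.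
- by rewrite gO; apply: PC_or.
Qed.

Lemma En_map (L1 L2 : Lang) (g : nat -> form L1 -> form L2) :
  (forall d p q, g d (Fand p q) = Fand (g d p) (g d q)) ->
  (forall d p q, g d (For p q) = For (g d p) (g d q)) ->
  (forall d p, g d (Fex p) = Fex (g d.+1 p)) ->
  (forall d p, qf p -> qf (g d p)) ->
  forall m d phi, En m phi -> En m (g d phi).
Proof.
move=> gA gO gE gqf; elim=> [|m IH] d phi /=; first exact: gqf.
case=> [Hpc|[psi [-> Hpc]]]; [left|right].
- exact: PosComb_map (gA d) (gO d) (IH d) Hpc.
- by exists (g d.+1 psi); split; last exact: PosComb_map (gA _) (gO _) (IH _) Hpc.
Qed.

Section NewConstant.
Variable L : Lang.

Definition cterm : term (Lc L) := @Tapp (Lc L) None (fun _ => Tvar 0).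

Fixpoint instc_term (d : nat) (t : term L) : term (Lc L) :=
  match t with
  | Tvar k => if k == d then cterm else Tvar k
  | Tapp f args => @Tapp (Lc L) (Some f) (fun i => instc_term d (args i))
  end.

Fixpoint instc (d : nat) (phi : form L) : form (Lc L) :=
  match phi with
  | Ftrue => Ftrue
  | Ffalse => Ffalse
  | Feq t u => Feq (instc_term d t) (instc_term d u)
  | Frel r args => @Frel (Lc L) r (fun i => instc_term d (args i))
  | Fnot p => Fnot (instc d p)
  | Fand p q => Fand (instc d p) (instc d q)
  | For p q => For (instc d p) (instc d q)
  | Fex p => Fex (instc d.+1 p)
  | Fall p => Fall (instc d.+1 p)
  end.

Fixpoint abstrc_term (d : nat) (t : term (Lc L)) : term L :=
  match t with
  | Tvar k => Tvar (if k < d then k else k.+1)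
  | Tapp o args =>
      match o return ('I_(@farity (Lc L) o) -> term L) -> term L with
      | Some f => fun args' => @Tapp L f args'
      | None => fun _ => Tvar d
      end (fun i => abstrc_term d (args i))
  end.

Fixpoint abstrc (d : nat) (phi : form (Lc L)) : form L :=
  match phi with
  | Ftrue => Ftrue
  | Ffalse => Ffalse
  | Feq t u => Feq (abstrc_term d t) (abstrc_term d u)
  | Frel r args => @Frel L r (fun i => abstrc_term d (args i))
  | Fnot p => Fnot (abstrc d p)
  | Fand p q => Fand (abstrc d p) (abstrc d q)
  | For p q => For (abstrc d p) (abstrc d q)
  | Fex p => Fex (abstrc d.+1 p)
  | Fall p => Fall (abstrc d.+1 p)
  end.

Definition env_set (D : Type) (e : nat -> D) (d : nat) (a : D) : nat -> D :=
  fun k => if k == d then a else e k.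

Definition env_insert (D : Type) (e : nat -> D) (d : nat) (a : D) : nat -> D :=
  fun k => if k < d then e k else if k == d then a else e k.-1.

Lemma env_set_scons (D : Type) (e : nat -> D) d (a x : D) :
  env_set (scons x e) d.+1 a = scons x (env_set e d a).
Proof. by apply/funext => -[|k]. Qed.

Lemma env_insert_scons (D : Type) (e : nat -> D) d (a x : D) :
  env_insert (scons x e) d.+1 a = scons x (env_insert e d a).
Proof.
apply/funext => -[|[|k]] //=; rewrite /env_insert ltnS eqSS //.
by case: d.
Qed.

Lemma env_insert0 (D : Type) (e : nat -> D) (a : D) : env_insert e 0 a = scons a e.
Proof. by apply/funext => -[]. Qed.

Lemma eval_instc (M : Struc L) (a : dom M) (e : nat -> dom M) d (t : term L) :
  @eval (Lc L) (expand a) e (instc_term d t) = eval (env_set e d a) t.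
Proof.
elim: t => [k|f args IH] /=; first by rewrite /env_set; case: eqP.
by congr (finterp M f); apply/funext => i; apply: IH.
Qed.

Lemma sat_instc (M : Struc L) (a : dom M) (phi : form L) (e : nat -> dom M) d :
  @sat (Lc L) (expand a) e (instc d phi) <-> sat (env_set e d a) phi.
Proof.
elim: phi e d => [| |t u|r args|p IH|p IHp q IHq|p IHp q IHq|p IH|p IH] e d /=.
- by [].
- by [].
- by rewrite !eval_instc.
- by under eq_fun do rewrite eval_instc.
- by rewrite IH.
- by rewrite IHp IHq.
- by rewrite IHp IHq.
- by split=> -[x Hx]; exists x; move: Hx; rewrite IH env_set_scons.
- by split=> Hx x; move: (Hx x); rewrite IH env_set_scons.
Qed.

Lemma eval_abstrc (M : Struc L) (a : dom M) (e : nat -> dom M) d t :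
  @eval (Lc L) (expand a) e t = eval (env_insert e d a) (abstrc_term d t).
Proof.
elim: t => [k|[f|] args IH] /=; last by rewrite /env_insert ltnn eqxx.
- rewrite /env_insert; case: (ltnP k d) => [kd|dk]; first by rewrite kd.
  by rewrite ltnNge (leq_trans dk) // gtn_eqF.
- by congr (finterp M f); apply/funext => i; apply: IH.
Qed.

Lemma sat_abstrc (M : Struc L) (a : dom M) (phi : form (Lc L)) (e : nat -> dom M) d :
  @sat (Lc L) (expand a) e phi <-> sat (env_insert e d a) (abstrc d phi).
Proof.
elim: phi e d => [| |t u|r args|p IH|p IHp q IHq|p IHp q IHq|p IH|p IH] e d /=.
- by [].
- by [].
- by rewrite !(eval_abstrc a e d).
- by under eq_fun do rewrite (eval_abstrc a e d).
- by rewrite (IH e d).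
- by rewrite (IHp e d) (IHq e d).
- by rewrite (IHp e d) (IHq e d).
- by split=> -[x Hx]; exists x; move: Hx; rewrite (IH _ d.+1) env_insert_scons.
- by split=> Hx x; move: (Hx x); rewrite (IH _ d.+1) env_insert_scons.
Qed.

Lemma closed_instc_term (t : term L) d :
  closed_term d.+1 t -> closed_term d (instc_term d t).
Proof.
elim: t => [k|f args IH] /=; last by move=> H i; apply: IH.
case: eqP => [_ _|/eqP kd] /=; first by case.
by rewrite ltnS leq_eqVlt (negPf kd).
Qed.

Lemma closed_instc (phi : form L) d :
  closed_at d.+1 phi -> closed_at d (instc d phi).
Proof.
elim: phi d => [| |t u|r args|p IH|p IHp q IHq|p IHp q IHq|p IH|p IH] d //=.
- by case=> Ht Hu; split; apply: closed_instc_term.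
- by move=> H i; apply: closed_instc_term.
- exact: IH.
- by case=> Hp Hq; split; [apply: IHp|apply: IHq].
- by case=> Hp Hq; split; [apply: IHp|apply: IHq].
- exact: IH.
- exact: IH.
Qed.

Lemma closed_abstrc_term (t : term (Lc L)) d :
  closed_term d t -> closed_term d.+1 (abstrc_term d t).
Proof.
elim: t => [k|[f|] args IH] //=; last by move=> H i; apply: IH.
by move=> kd; rewrite kd ltnW.
Qed.

Lemma closed_abstrc (phi : form (Lc L)) d :
  closed_at d phi -> closed_at d.+1 (abstrc d phi).
Proof.
elim: phi d => [| |t u|r args|p IH|p IHp q IHq|p IHp q IHq|p IH|p IH] d //=.
- by case=> Ht Hu; split; apply: closed_abstrc_term.
- by move=> H i; apply: closed_abstrc_term.
- exact: IH.
- by case=> Hp Hq; split; [apply: IHp|apply: IHq].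
- by case=> Hp Hq; split; [apply: IHp|apply: IHq].
- exact: IH.
- exact: IH.
Qed.

Lemma qf_instc d (phi : form L) : qf phi -> qf (instc d phi).
Proof.
elim: phi d => [| |t u|r args|p IH|p IHp q IHq|p IHp q IHq|p IH|p IH] d //=.
- exact: IH.
- by case=> Hp Hq; split; [apply: IHp|apply: IHq].
- by case=> Hp Hq; split; [apply: IHp|apply: IHq].
Qed.

Lemma qf_abstrc d (phi : form (Lc L)) : qf phi -> qf (abstrc d phi).
Proof.
elim: phi d => [| |t u|r args|p IH|p IHp q IHq|p IHp q IHq|p IH|p IH] d //=.
- exact: IH.
- by case=> Hp Hq; split; [apply: IHp|apply: IHq].
- by case=> Hp Hq; split; [apply: IHp|apply: IHq].
Qed.

Lemma En_instc m d (phi : form L) : En m phi -> En m (instc d phi).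
Proof. by apply: (@En_map _ _ instc) => //; exact: qf_instc. Qed.

Lemma En_abstrc m d (phi : form (Lc L)) : En m phi -> En m (abstrc d phi).
Proof. by apply: (@En_map _ _ abstrc) => //; exact: qf_abstrc. Qed.

End NewConstant.

Section Translation.
Variables (L : Lang) (M : Struc L).

Lemma sat_instc0 (a : dom M) (chi : form L) (e : nat -> dom M) :
  closed_at 1 chi -> @sat (Lc L) (expand a) e (instc 0 chi) <-> sat (scons a e) chi.
Proof. by move=> Hcl; rewrite sat_instc; apply: sat_closed Hcl _ => -[]. Qed.

Lemma sat_abstrc0 (a : dom M) (phi : form (Lc L)) (e : nat -> dom M) :
  @sat (Lc L) (expand a) e phi <-> sat (scons a e) (abstrc 0 phi).
Proof. by rewrite (sat_abstrc _ _ _ 0) env_insert0. Qed.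

Lemma ThE_instc n (a : dom M) (chi : form L) (e : nat -> dom M) :
  PosComb (En n) chi -> closed_at 1 chi -> sat (scons a e) chi ->
  ThE n (expand a) (instc 0 chi).
Proof.
move=> Hpc Hcl Hsat; split.
- apply: PosComb_map (PosComb_closed_at Hpc Hcl) => // psi [HEn Hc].
  by split; [apply: En_instc|apply: closed_instc].
- by move=> e'; apply/sat_instc0 => //; apply: (sat_closed Hcl _).1 Hsat => -[].
Qed.

Lemma ThE_abstrc n (a : dom M) (phi : form (Lc L)) :
  ThE n (expand a) phi -> ThE n.+1 M (Fex (abstrc 0 phi)).
Proof.
case=> Hpc HM; split.
- apply: PC_base; split; last exact: closed_abstrc (closed_at_PosComb Hpc).
  right; exists (abstrc 0 phi); split => //.
  by apply: PosComb_map Hpc => // psi [HEn _]; apply: En_abstrc.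
- by move=> e; exists a; apply/sat_abstrc0.
Qed.

End Translation.

Section Ultrapower.
Variables (L : Lang) (N : Struc L) (I : Type) (U : set_system I).
Context {UU : UltraFilter U}.

Lemma ultra_notP (A : set I) : U [set i | ~ A i] <-> ~ U A.
Proof.
split=> [HnA HA|]; last by case: (in_ultra_setVsetC A UU).
by have [i []] := filter_ex (filterI HA HnA).
Qed.

Lemma ultra_orP (A B : set I) : U [set i | A i \/ B i] <-> U A \/ U B.
Proof.
split=> [HAB|[HA|HB]]; [|by apply: filterS HA; left|by apply: filterS HB; right].
case: (in_ultra_setVsetC A UU) => [|HnA]; first by left.
by right; apply: filterS (filterI HAB HnA) => i [[]].
Qed.

Definition ueq (f g : {classic (I -> dom N)}) : bool := `[< U [set i | f i = g i] >].

Lemma ueq_is_equiv : equiv_class_of ueq.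
Proof.
split=> [f|f g|g f h]; rewrite /ueq.
- by apply/asboolP; apply: filterE.
- by apply/asboolP/asboolP; apply: filterS.
- move=> /asboolP Hfg /asboolP Hgh; apply/asboolP.
  by apply: filterS (filterI Hfg Hgh) => i /= [-> ->].
Qed.

Canonical ueq_equiv := EquivRelPack ueq_is_equiv.

Definition upow_dom := {eq_quot ueq_equiv}.

Definition cls (f : I -> dom N) : upow_dom := \pi f.

Lemma cls_eq f g : cls f = cls g <-> U [set i | f i = g i].
Proof. exact: (rwP2 (eqmodP ueq_equiv f g) (asboolP _)). Qed.

Lemma repr_cls f : U [set i | repr (cls f) i = f i].
Proof. by apply/cls_eq; rewrite /cls reprK. Qed.

Lemma repr_cls_tuple k (G : 'I_k -> I -> dom N) :
  U [set i | (fun j => repr (cls (G j)) i) = (fun j => G j i)].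
Proof.
apply: filterS (filter_forall _ (fun j => repr_cls (G j))) => i Hi.
exact/funext.
Qed.

Definition upow : Struc L := {|
  dom := upow_dom;
  dom_inhabited := let: inhabits y := dom_inhabited N in inhabits (cls (fun _ => y));
  finterp := fun f args => cls (fun i => finterp N f (fun j => repr (args j) i));
  rinterp := fun r args => U [set i | rinterp N r (fun j => repr (args j) i)] |}.

Lemma eval_upow (F : nat -> I -> dom N) (t : term L) :
  @eval L upow (fun k => cls (F k)) t = cls (fun i => eval (fun k => F k i) t).
Proof.
elim: t => [k|f args IH] //=; apply/cls_eq.
apply: filterS (repr_cls_tuple (fun j i => eval (F^~ i) (args j))) => i /= Hi.
by rewrite -Hi; congr (finterp N f); apply/funext => j; rewrite IH.
Qed.

Definition los_at (phi : form L) : Prop := forall F : nat -> I -> dom N,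
  @sat L upow (fun k => cls (F k)) phi <-> U [set i | sat (fun k => F k i) phi].

Lemma scons_cls (g : I -> dom N) (F : nat -> I -> dom N) :
  scons (cls g) (fun k => cls (F k)) = fun k => cls (scons g F k).
Proof. by apply/funext => -[]. Qed.

Lemma scons_at (g : I -> dom N) (F : nat -> I -> dom N) (i : I) :
  (fun k => scons g F k i) = scons (g i) (fun k => F k i).
Proof. by apply/funext => -[]. Qed.

Lemma los_ex (phi : form L) : los_at phi -> los_at (Fex phi).
Proof.
move=> Hphi F /=; split=> [[x]|HU].
- rewrite -[x]reprK -/(cls _) scons_cls => /Hphi.
  by apply: filterS => i; rewrite /= scons_at => Hi; exists (repr x i).
- have /choice [g Hg] : forall i, exists y : dom N,
      (exists y', sat (scons y' (fun k => F k i)) phi) ->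
      sat (scons y (fun k => F k i)) phi.
    move=> i; case: (pselect (exists y, sat (scons y (fun k => F k i)) phi)).
    + by case=> y Hy; exists y.
    + by case: (dom_inhabited N) => y0 Hn; exists y0.
  exists (cls g); rewrite scons_cls; apply/Hphi.
  by apply: filterS HU => i /Hg; rewrite /= scons_at.
Qed.

Lemma los_not (phi : form L) : los_at phi -> los_at (Fnot phi).
Proof. by move=> Hphi F /=; rewrite Hphi; apply: iff_sym (ultra_notP _). Qed.

Lemma los_equiv (phi psi : form L) :
  los_at phi -> (forall (M : Struc L) (e : nat -> dom M), sat e phi <-> sat e psi) ->
  los_at psi.
Proof. by move=> Hphi Heq F; rewrite -Heq Hphi; split; apply: filterS => i /Heq. Qed.

Theorem los (phi : form L) : los_at phi.
Proof.
elim: phi => [| |t u|r args|p IH|p IHp q IHq|p IHp q IHq|p IH|p IH] F.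
- by split=> // _; apply: filterT.
- by split=> //= /filter_ex [].
- by rewrite /= !eval_upow cls_eq.
- rewrite /=; under eq_fun => i do under eq_fun => j do rewrite eval_upow.
  have E := repr_cls_tuple (fun j i => eval (F^~ i) (args j)).
  by split=> H; apply: filterS (filterI H E) => i /= [+ Ei]; rewrite Ei.
- exact: los_not.
- by rewrite /= IHp IHq; apply: iff_sym; apply: near_andP.
- by rewrite /= IHp IHq; apply: iff_sym; apply: ultra_orP.
- exact: los_ex.
- apply: los_equiv (los_not (los_ex (los_not IH))) _ F => M e.
  exact: iff_sym (sat_Fall_dual e p).
Qed.

Lemma diag_elementary : @elementary_embedding L N upow (fun y => cls (fun _ => y)).
Proof.
move=> phi e; rewrite (los phi (fun k _ => e k)).
by split=> [He|/filter_const //]; apply: filterE.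
Qed.

End Ultrapower.

Arguments upow {L} N {I} U {UU}.
Arguments cls {L N I} U {UU} f.

Lemma En_Ftrue (L : Lang) n : En n (@Ftrue L).
Proof. by elim: n => [|n IH] //=; left; apply: PC_base. Qed.

Lemma ThE_Fand (L : Lang) n (M : Struc L) (phi psi : form L) :
  ThE n M phi -> ThE n M psi -> ThE n M (Fand phi psi).
Proof. by move=> [Hphi HMphi] [Hpsi HMpsi]; split; [apply: PC_and|move=> e; split]. Qed.

Section Backward.
Variables (L : Lang) (M N : Struc L) (n : nat).
Hypothesis realized : forall a : dom M,
  exists (Nstar : Struc L) (h : dom N -> dom Nstar),
    elementary_embedding h /\ exists b : dom Nstar, ThE_incl n (expand a) (expand b).

Lemma true_in_Fex_transfer (chi : form L) :
  PosComb (En n) chi -> closed_at 1 chi -> true_in M (Fex chi) -> true_in N (Fex chi).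
Proof.
move=> Hpc Hcl HM e; case: (dom_inhabited M) => x0.
have [a Ha] := HM (fun _ => x0).
have [Nstar [h [Hh [b Hb]]]] := realized a.
have [_ Hbchi] := Hb _ (ThE_instc Hpc Hcl Ha).
by apply/Hh; exists b; apply/(sat_instc0 _ _ Hcl).
Qed.

Lemma true_in_En_succ_transfer (psi : form L) :
  En n.+1 psi -> sentence psi -> true_in M psi -> true_in N psi.
Proof.
case=> [Hpc|[chi [-> Hpc]]] Hs; last exact: true_in_Fex_transfer.
have Hcl : closed_at 1 psi by apply: closed_at_le Hs.
move=> HM e; apply/(sat_Fex_sentence _ Hs); apply: true_in_Fex_transfer => // e'.
exact/(sat_Fex_sentence _ Hs).
Qed.

Lemma ThE_incl_succ : ThE_incl n.+1 M N.
Proof.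
move=> phi [Hpc HM]; split=> //.
exact: PosComb_true_in_transfer true_in_En_succ_transfer Hpc HM.
Qed.

End Backward.

Section Forward.
Variables (L : Lang) (M N : Struc L) (n : nat).
Hypothesis incl : ThE_incl n.+1 M N.
Variable a : dom M.

(* Only variable 0 is free in [abstrc 0 phi], so a constant environment does. *)
Definition realizers (phi : form (Lc L)) : set (dom N) :=
  [set x | sat (fun _ => x) (abstrc 0 phi)].

Lemma realizers_neq0 (phi : form (Lc L)) :
  ThE n (expand a) phi -> realizers phi !=set0.
Proof.
move=> Hphi; have Hcl := closed_abstrc (closed_at_PosComb Hphi.1).
have [_ HN] := incl (ThE_abstrc Hphi); case: (dom_inhabited N) => y.
have [x Hx] := HN (fun _ => y).
by exists x; apply: (sat_closed Hcl _).1 Hx => -[].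
Qed.

Lemma realizers_proper_filter : ProperFilter (filter_from (ThE n (expand a)) realizers).
Proof.
apply: filter_from_proper realizers_neq0; apply: filter_from_filter.
  by exists Ftrue; split=> //; apply: PC_base; split=> //; apply: En_Ftrue.
move=> phi psi Hphi Hpsi; exists (Fand phi psi); first exact: ThE_Fand.
by move=> x [].
Qed.

Lemma ThE_type_realized : exists (Nstar : Struc L) (h : dom N -> dom Nstar),
  elementary_embedding h /\ exists b : dom Nstar, ThE_incl n (expand a) (expand b).
Proof.
have [U [UU realizersU]] := ultraFilterLemma realizers_proper_filter.
exists (upow N U), (fun y => cls U (fun _ => y)); split; first exact: diag_elementary.
exists (cls U id) => phi Hphi; split; first exact: Hphi.1.
have Hcl := closed_abstrc (closed_at_PosComb Hphi.1).
have /(los _ (fun _ => id)) HU : U (realizers phi) by apply: realizersU; exists phi.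
by move=> e; apply/sat_abstrc0; apply: (sat_closed Hcl _).1 HU => -[].
Qed.

End Forward.

Theorem proposition6p1 (L : Lang) (M N : Struc L) (n : nat) :
  ThE_incl n.+1 M N <->
  (forall a : dom M,
     exists (Nstar : Struc L) (h : dom N -> dom Nstar),
       elementary_embedding h /\
       exists b : dom Nstar, ThE_incl n (expand a) (expand b)).
Proof. by split=> [incl a|]; [exact: ThE_type_realized|exact: ThE_incl_succ]. Qed.
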